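(* Let $G$ be a group with a finite symmetric generating set $X$, let $\phi:G\to G'$ be an epimorphism of groups, and take $X'=\phi(X)$ as generating set for $G'$. Then for all $n\ge0$, $\Gamma_{G,X}(n)\ge\Gamma_{G',X'}(n)$.
   Context: A word over a generating set is a geodesic if its length equals the word length of the element it represents; $\Gamma_{G,X}(n)$ is the number of geodesic words over $X$ of length at most $n$. *)

From mathcomp Require Import all_boot.
From mathcomp Require Import boolp.

Set Implicit Arguments.
Unset Strict Implicit.
Unset Printing Implicit Defensive.

Local Open Scope group_scope.

Section Words.
Variable G : groupType.

Definition evalw (w : seq G) : G := foldr (fun x y => x * y) 1 w.

Definition is_word (X : seq G) (w : seq G) : bool := all (fun x => x \in X) w.

(* X (finite, as a duplicate-free list) generates G as a monoid;
   for symmetric X this is the same as generating G as a group *)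
Definition generates (X : seq G) : Prop :=
  forall g : G, exists w, is_word X w /\ evalw w = g.

Definition symmetric_set (X : seq G) : Prop :=
  forall x, x \in X -> x^-1 \in X.

Definition geodesic (X : seq G) (w : seq G) : Prop :=
  is_word X w /\
  forall v, is_word X v -> evalw v = evalw w -> size w <= size v.

Fixpoint words (X : seq G) (k : nat) : seq (seq G) :=
  match k with
  | 0 => [:: [::]]
  | k.+1 => [seq x :: w | x <- X, w <- words X k]
  end.

Definition Gamma (X : seq G) (n : nat) : nat :=
  \sum_(k < n.+1) count (fun w => `[< geodesic X w >]) (words X k).

End Words.

(* Choosing, for each generator of G', one preimage in X turns words
   over X' into words over X, injectively and without changing length.  A
   geodesic w over X' lifts to a geodesic: a shorter word over X representing
   the same element as the lift would map under phi to a word over X' shorter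
   than w with the same value as w. *)

From mathcomp Require Import all_boot.
From mathcomp Require Import boolp.

Set Implicit Arguments.
Unset Strict Implicit.
Unset Printing Implicit Defensive.
Local Open Scope group_scope.

Lemma mem_words (G : groupType) (X : seq G) k w :
  (w \in words X k) = is_word X w && (size w == k).
Proof.
elim: k w => [|k IHk] [|x w] //=; first by rewrite inE andbF.
  by apply/allpairsPdep => -[y [v []]].
rewrite eqSS -andbA; apply/allpairsPdep/idP.
  by move=> [y [v [yX vW [-> ->]]]]; rewrite yX -IHk.
by move=> /andP [xX wW]; exists x, w; rewrite IHk.
Qed.

Lemma uniq_words (G : groupType) (X : seq G) k : uniq X -> uniq (words X k).
Proof.
move=> uX; elim: k => [//|k IHk] /=.
by apply: allpairs_uniq => // -[a b] [c d] _ _ [-> ->].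
Qed.

Lemma group_gmulf1 (G G' : groupType) (f : {multiplicative G -> G'}) : f 1 = 1.
Proof. by apply: (mulgI (f 1)); rewrite -gmulfM !mulg1. Qed.

Lemma evalw_map (G G' : groupType) (f : {multiplicative G -> G'}) w :
  evalw (map f w) = f (evalw w).
Proof. by elim: w => [|x w IHw] /=; rewrite ?group_gmulf1 // gmulfM IHw. Qed.

Section LiftGeodesics.

Variables (G G' : groupType) (f : {multiplicative G -> G'}).
Variables (X : seq G) (X' : seq G').
Hypothesis memX' : X' =i map f X.
Hypothesis uniqX' : uniq X'.

Definition lift_letter (y : G') : G := nth 1 X (index y (map f X)).

Definition lift_word : seq G' -> seq G := map lift_letter.

Lemma lift_letterP y :
  y \in X' -> lift_letter y \in X /\ f (lift_letter y) = y.
Proof.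
rewrite memX' => yX; have iX : index y (map f X) < size X.
  by rewrite -(size_map f) index_mem.
by rewrite /lift_letter mem_nth // -(nth_map 1 (f 1)) // nth_index.
Qed.

Lemma lift_wordK w : is_word X' w -> map f (lift_word w) = w.
Proof.
by elim: w => [|y w IHw] //= /andP [/lift_letterP [_ ->] /IHw ->].
Qed.

Lemma is_word_lift w : is_word X' w -> is_word X (lift_word w).
Proof.
by elim: w => [|y w IHw] //= /andP [/lift_letterP [-> _] /IHw].
Qed.

Lemma is_word_map v : is_word X v -> is_word X' (map f v).
Proof.
by elim: v => [|x v IHv] //= /andP [xX /IHv ->]; rewrite memX' map_f.
Qed.

Lemma geodesic_lift w : geodesic X' w -> geodesic X (lift_word w).
Proof.
move=> [wX' w_min]; split=> [|v vX ev]; first exact: is_word_lift.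
rewrite size_map -(size_map f v); apply: w_min; first exact: is_word_map.
by rewrite evalw_map ev -evalw_map lift_wordK.
Qed.

Lemma count_geodesic_words_le k :
  count (fun w => `[< geodesic X' w >]) (words X' k) <=
  count (fun w => `[< geodesic X w >]) (words X k).
Proof.
rewrite -!size_filter -(size_map lift_word); apply: uniq_leq_size.
  rewrite map_inj_in_uniq ?filter_uniq ?uniq_words // => u w.
  rewrite !mem_filter !mem_words => /and3P [_ uX _] /and3P [_ wX _] e.
  by rewrite -(lift_wordK uX) -(lift_wordK wX) e.
move=> u /mapP [w]; rewrite mem_filter mem_words.
move=> /and3P [/asboolP w_geo wX sw] ->.
rewrite mem_filter mem_words is_word_lift // size_map sw !andbT.
by apply/asboolP; apply: geodesic_lift.
Qed.

Lemma Gamma_lift_le n : Gamma X' n <= Gamma X n.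
Proof. by apply: leq_sum => k _; exact: count_geodesic_words_le. Qed.

End LiftGeodesics.

Theorem lemma2p6 (G G' : groupType) (X : seq G)
  (Xuniq : uniq X) (Xsym : symmetric_set X) (Xgen : generates X)
  (phi : {multiplicative G -> G'}) (phi_surj : forall g' : G', exists g, phi g = g')
  (n : nat) :
  Gamma (undup (map phi X)) n <= Gamma X n.
Proof. by apply: Gamma_lift_le; [exact: mem_undup | exact: undup_uniq]. Qed.
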